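(* Let $G=(V,E)$ be a connected graph and let $\Gamma(G)=\{G_\pi:\ \pi:E\to\{\pm1\},\ \rho(G_\pi)<\rho(G)\}$. Then $\Gamma(G)$ is empty if and only if $G$ is a tree or a unicyclic graph whose unique cycle has odd length.
   Context: All graphs are finite, simple and undirected. A signed graph $G_\pi$ is a pair $(G,\pi)$ with $\pi:E\to\{+1,-1\}$; its adjacency matrix has entry $\pi(\{i,j\})$ for adjacent $i,j$ and $0$ otherwise, and its eigenvalues are those of this symmetric matrix. $\rho(G_\pi)$ denotes the largest modulus of an eigenvalue of $G_\pi$, and $\rho(G)$ the spectral radius of the adjacency matrix of $G$. *)

From HB Require Import structures.
From mathcomp Require Import all_boot all_order all_algebra.
From mathcomp Require Import polyrcf.
From mathcomp Require Import reals.
Set Implicit Arguments. Unset Strict Implicit. Unset Printing Implicit Defensive.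
Import Order.TTheory GRing.Theory Num.Theory.
Local Open Scope ring_scope.

Definition simple_graph (n : nat) (e : rel 'I_n) : Prop :=
  symmetric e /\ irreflexive e.

Definition connected_graph (n : nat) (e : rel 'I_n) : Prop :=
  forall x y : 'I_n, connect e x y.

Definition is_cycle (n : nat) (e : rel 'I_n) (c : seq 'I_n) : bool :=
  (2 < size c)%N && ucycleb e c.

Definition cycle_edges (n : nat) (c : seq 'I_n) : {set {set 'I_n}} :=
  [set [set x; next c x] | x in c].

Definition is_tree (n : nat) (e : rel 'I_n) : Prop :=
  connected_graph e /\ forall c, ~~ is_cycle e c.

Definition is_odd_unicyclic (n : nat) (e : rel 'I_n) : Prop :=
  connected_graph e /\
  exists c, [/\ is_cycle e c,
     (forall c', is_cycle e c' -> cycle_edges c' = cycle_edges c)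
   & odd (size c)].

(* A signature pi : E -> {+1,-1}, given on unordered pairs ({set 'I_n});
   pi X = true encodes sign -1.  Its values on non-edges are irrelevant. *)
Definition signed_adj (R : ringType) (n : nat) (e : rel 'I_n)
    (pi : {set 'I_n} -> bool) : 'M[R]_n :=
  \matrix_(i, j) (if e i j then (-1) ^+ pi [set i; j] else 0).

Definition adj (R : ringType) (n : nat) (e : rel 'I_n) : 'M[R]_n :=
  signed_adj R e (fun _ => false).

(* Largest modulus of an eigenvalue.  The matrices considered are real
   symmetric, so all eigenvalues are real roots of the characteristic
   polynomial; rootsR lists them. *)
Definition spec_rad (R : rcfType) (n : nat) (A : 'M[R]_n) : R :=
  \big[Num.max/0]_(x <- rootsR (char_poly A)) `|x|.

(* Both spectral radii are extreme values of Rayleigh quotients, and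
   |x^T A_pi x| <= |x|^T A |x|, so rho(G_pi) <= rho(G).  If equality holds for a
   connected G, then for an eigenvector x of A_pi with eigenvalue of modulus
   rho(G), |x| is a Perron vector of A, hence has no zero entry, and equality in
   the triangle inequality forces all terms x_i pi(ij) x_j to share one sign: pi is
   switching equivalent to +G or -G.  By Harary's balance theorem this means every
   cycle C has sign sg^|C| for a fixed sg.  Choosing pi negative on a single edge X
   shows that this holds for every pi exactly when X lies on all cycles or on none,
   for every X, and all cycles are odd; that is, G is a tree or an odd unicyclic
   graph. *)

From HB Require Import structures.
From mathcomp Require Import all_boot all_order all_algebra.
From mathcomp Require Import polyrcf reals.
From mathcomp Require Import ring lra zify.
From mathcomp Require classical_sets.
From Stdlib Require Import Classical.
Import Order.TTheory GRing.Theory Num.Theory.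
Local Open Scope ring_scope.

Set Implicit Arguments. Unset Strict Implicit. Unset Printing Implicit Defensive.

Section BilinearForm.
Variables (R : comNzRingType) (n : nat).
Implicit Types (M : 'M[R]_n) (x y : 'I_n -> R).

Definition bform M x y : R := \sum_i \sum_j x i * M i j * y j.
Definition dot x y : R := \sum_i x i * y i.
Definition mulmxv M y : 'I_n -> R := fun i => \sum_j M i j * y j.
Definition mulvmx x M : 'I_n -> R := fun j => \sum_i x i * M i j.
Definition delta (i : 'I_n) : 'I_n -> R := fun k => (k == i)%:R.

Lemma bformDl M x x' y a b :
  bform M (fun i => a * x i + b * x' i) y = a * bform M x y + b * bform M x' y.
Proof.
rewrite /bform !mulr_sumr -big_split; apply: eq_bigr => i _.
rewrite !mulr_sumr -big_split; apply: eq_bigr => j _ /=; ring.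
Qed.

Lemma bform_mulmxv M x y : bform M x y = dot x (mulmxv M y).
Proof.
rewrite /bform /dot; apply: eq_bigr => i _; rewrite mulr_sumr.
by apply: eq_bigr => j _; rewrite mulrA.
Qed.

Lemma bform_mulvmx M x y : bform M x y = dot (mulvmx x M) y.
Proof.
rewrite /bform /dot /mulvmx exchange_big; apply: eq_bigr => j _.
by rewrite mulr_suml.
Qed.

Lemma dot_deltal i y : dot (delta i) y = y i.
Proof.
rewrite /dot /delta (bigD1 i) //= eqxx mul1r big1 ?addr0 // => k /negbTE ->.
by rewrite mul0r.
Qed.

Lemma mulmxv_delta M i j : mulmxv M (delta j) i = M i j.
Proof.
rewrite /mulmxv /delta (bigD1 j) //= eqxx mulr1 big1 ?addr0 // => k /negbTE ->.
by rewrite mulr0.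
Qed.

Lemma bform_deltal M i y : bform M (delta i) y = mulmxv M y i.
Proof. by rewrite bform_mulmxv dot_deltal. Qed.

Lemma bform_scalar_subl M lam x y :
  bform (lam%:M - M) x y = lam * dot x y - bform M x y.
Proof.
rewrite /bform /dot mulr_sumr -sumrB; apply: eq_bigr => i _.
have -> : \sum_j x i * (lam%:M - M) i j * y j
    = \sum_j x i * lam%:M i j * y j - \sum_j x i * M i j * y j.
  by rewrite -sumrB; apply: eq_bigr => j _; rewrite !mxE; ring.
rewrite (bigD1 i) //= big1 ?addr0 => [|j ji]; last by rewrite mxE eq_sym (negbTE ji) mulr0n; ring.
by rewrite mxE eqxx mulr1n; congr (_ - _); ring.
Qed.

Lemma bformN M x y : bform (- M) x y = - bform M x y.
Proof.
rewrite /bform -sumrN; apply: eq_bigr => i _; rewrite -sumrN.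
by apply: eq_bigr => j _; rewrite mxE; ring.
Qed.

Lemma bform_eigen M lam x :
  (forall i, mulmxv M x i = lam * x i) -> bform M x x = lam * dot x x.
Proof.
move=> hx; rewrite bform_mulmxv /dot mulr_sumr.
by apply: eq_bigr => i _; rewrite hx; ring.
Qed.

Section Symmetric.
Variable M : 'M[R]_n.
Hypothesis symM : forall i j, M i j = M j i.

Lemma bformC x y : bform M x y = bform M y x.
Proof.
rewrite /bform exchange_big; apply: eq_bigr => i _; apply: eq_bigr => j _.
by rewrite symM; ring.
Qed.

Lemma bformDr x y y' a b :
  bform M x (fun i => a * y i + b * y' i) = a * bform M x y + b * bform M x y'.
Proof. by rewrite bformC bformDl !(bformC x). Qed.

Lemma scalar_subl_sym lam i j : (lam%:M - M) i j = (lam%:M - M) j i.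
Proof. by rewrite !mxE symM eq_sym. Qed.

End Symmetric.
End BilinearForm.

Lemma root_char_poly_eigvec (F : fieldType) n (M : 'M[F]_n) lam :
  (forall i j, M i j = M j i) -> root (char_poly M) lam ->
  exists2 x : 'I_n -> F, (exists i, x i != 0) & forall i, mulmxv M x i = lam * x i.
Proof.
move=> symM; rewrite -eigenvalue_root_char => /eigenvalueP [v hv vn0].
exists (v 0).
  apply/existsP; apply: contraR vn0 => /existsPn h; apply/eqP/rowP => k.
  by rewrite mxE; apply/eqP; move: (h k); rewrite negbK.
move=> j; have /(congr1 (fun m : 'rV[F]_n => m 0 j)) := hv; rewrite !mxE => <-.
by apply: eq_bigr => k _; rewrite symM mulrC.
Qed.


Section RealBilinearForm.
Variables (R : realFieldType) (n : nat).
Implicit Types (M : 'M[R]_n) (x y z : 'I_n -> R).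

Definition frobenius2 M : R := \sum_i \sum_j M i j ^+ 2.

Lemma frobenius2_ge0 M : 0 <= frobenius2 M.
Proof. by apply: sumr_ge0 => i _; apply: sumr_ge0 => j _; exact: sqr_ge0. Qed.

Lemma quadratic_ge0_discriminant (a b c : R) :
  0 <= c -> (forall t, 0 <= a + 2 * b * t + c * t ^+ 2) -> b ^+ 2 <= a * c.
Proof.
move=> c_ge0 hq; have [c_gt0|c_le0] := ltP 0 c.
  have := hq (- b / c); set t := - b / c => ht.
  have ct : c * t = - b by rewrite /t mulrC divfK // gt_eqF.
  have : 0 <= c * (a + 2 * b * t + c * t ^+ 2) by rewrite mulr_ge0 // ltW.
  have -> : c * (a + 2 * b * t + c * t ^+ 2) = a * c + 2 * b * (c * t) + (c * t) ^+ 2.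
    by ring.
  rewrite ct; lra.
have c0 : c = 0 by apply/le_anti; rewrite c_ge0 c_le0.
rewrite c0 mulr0 in hq *; have [->|b_neq0] := eqVneq b 0; first by rewrite expr0n.
have := hq (- (a + 1) / (2 * b)).
rewrite mulrC divfK ?mulf_neq0 ?pnatr_eq0 //; lra.
Qed.

Lemma dot_ge0 x : 0 <= dot x x.
Proof. by apply: sumr_ge0 => i _; rewrite -expr2 sqr_ge0. Qed.

Lemma dot_eq0 x : dot x x = 0 -> forall i, x i = 0.
Proof.
move=> /eqP; rewrite psumr_eq0 => [/allP hx i|i _]; last by rewrite -expr2 sqr_ge0.
by have := hx i (mem_index_enum _); rewrite -expr2 sqrf_eq0 => /eqP.
Qed.

Lemma dot_gt0 x : (exists i, x i != 0) -> 0 < dot x x.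
Proof.
by move=> [i xi]; rewrite lt_def dot_ge0 andbT; apply: contra xi => /eqP/dot_eq0 ->.
Qed.

Lemma dot_normr x : dot (fun i => `|x i|) (fun i => `|x i|) = dot x x.
Proof. by apply: eq_bigr => i _; rewrite -normrM -expr2 ger0_norm ?sqr_ge0. Qed.

Lemma dot_cauchy_schwarz x y : dot x y ^+ 2 <= dot x x * dot y y.
Proof.
apply: quadratic_ge0_discriminant; first exact: dot_ge0.
move=> t; have -> : dot x x + 2 * dot x y * t + dot y y * t ^+ 2 =
    dot (fun i => x i + t * y i) (fun i => x i + t * y i).
  transitivity (dot x x + (2 * t) * dot x y + t ^+ 2 * dot y y); first by ring.
  by rewrite /dot !mulr_sumr -!big_split; apply: eq_bigr => i _ /=; ring.
exact: dot_ge0.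
Qed.

Lemma dot_mulvmx_le x M : dot (mulvmx x M) (mulvmx x M) <= frobenius2 M * dot x x.
Proof.
rewrite /frobenius2 exchange_big /dot mulr_suml; apply: ler_sum => k _.
have := dot_cauchy_schwarz x (fun j => M j k); rewrite /dot -expr2 mulrC.
by under [X in _ <= X * _ -> _]eq_bigr do rewrite -expr2.
Qed.

Lemma normr_le_of_sqr_le (a b K : R) :
  0 <= b -> 0 <= K -> a ^+ 2 <= K * b ^+ 2 -> `|a| <= (1 + K) * b.
Proof.
move=> b_ge0 K_ge0 hab; have [a_ge0|a_lt0] := leP 0 a.
  by rewrite ger0_norm //; have [|] := leP a b; nra.
by rewrite ltr0_norm //; have [|] := leP (- a) b; nra.
Qed.

Lemma bform_normr_le M x : `|bform M x x| <= (1 + frobenius2 M) * dot x x.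
Proof.
apply: normr_le_of_sqr_le; [exact: dot_ge0 | exact: frobenius2_ge0 |].
rewrite bform_mulvmx; apply: le_trans (dot_cauchy_schwarz _ _) _.
rewrite expr2 mulrA ler_wpM2r ?dot_ge0 //; exact: dot_mulvmx_le.
Qed.

Lemma mulvmxK M x : M \in unitmx -> forall k, mulvmx (mulvmx x M) (invmx M) k = x k.
Proof.
move=> M_unit k; have := congr1 (fun m : 'rV[R]_n => m 0 k) (mulmxK M_unit (\row_j x j)).
rewrite !mxE => <-; apply: eq_bigr => j _; congr (_ * _); rewrite mxE.
by apply: eq_bigr => i _; rewrite mxE.
Qed.

Section PositiveSemidefinite.
Variable M : 'M[R]_n.
Hypothesis symM : forall i j, M i j = M j i.
Hypothesis psdM : forall z, 0 <= bform M z z.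

Lemma psd_cauchy_schwarz x y : bform M x y ^+ 2 <= bform M x x * bform M y y.
Proof.
apply: quadratic_ge0_discriminant => // t.
have := psdM (fun i => 1 * x i + t * y i).
rewrite bformDl !bformDr // (bformC symM y x).
have -> : 1 * (1 * bform M x x + t * bform M x y) + t * (1 * bform M x y + t * bform M y y)
  = bform M x x + 2 * bform M x y * t + bform M y y * t ^+ 2 by ring.
by [].
Qed.

Lemma psd_kernel x : bform M x x = 0 -> forall i, mulmxv M x i = 0.
Proof.
move=> hx i; have := psd_cauchy_schwarz (delta R i) x.
rewrite hx mulr0 bform_deltal => hle.
by apply/eqP; rewrite -sqrf_eq0 eq_le hle sqr_ge0.
Qed.

Lemma psd_mulvmx_le x : dot (mulvmx x M) (mulvmx x M) <= (1 + frobenius2 M) * bform M x x.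
Proof.
set w := mulvmx x M; set K := 1 + frobenius2 M.
have K_ge0 : 0 <= K by rewrite addr_ge0 ?frobenius2_ge0.
have ww : dot w w = bform M x w by rewrite bform_mulvmx.
have hw : bform M w w <= K * dot w w := le_trans (ler_norm _) (bform_normr_le M w).
have [w0|w_neq0] := eqVneq (dot w w) 0; first by rewrite w0 mulr_ge0.
have w_gt0 : 0 < dot w w by rewrite lt_def w_neq0 dot_ge0.
rewrite -(ler_pM2l w_gt0).
have -> : dot w w * dot w w = bform M x w ^+ 2 by rewrite ww expr2.
have -> : dot w w * (K * bform M x x) = bform M x x * (K * dot w w) by ring.
exact: le_trans (psd_cauchy_schwarz x w) (ler_wpM2l (psdM x) hw).
Qed.

Lemma psd_unit_coercive :
  M \in unitmx -> exists2 K, 0 <= K & forall x, dot x x <= K * bform M x x.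
Proof.
move=> M_unit; exists (frobenius2 (invmx M) * (1 + frobenius2 M)) => [|x].
  by rewrite mulr_ge0 ?addr_ge0 ?frobenius2_ge0.
have -> : dot x x = dot (mulvmx (mulvmx x M) (invmx M)) (mulvmx (mulvmx x M) (invmx M)).
  by apply: eq_bigr => k _; rewrite !mulvmxK.
apply: le_trans (dot_mulvmx_le _ _) _; rewrite -mulrA ler_wpM2l ?frobenius2_ge0 //.
exact: psd_mulvmx_le.
Qed.

End PositiveSemidefinite.

Lemma rayleigh_eigvec M lam y : (forall i j, M i j = M j i) ->
  (forall z, bform M z z <= lam * dot z z) -> bform M y y = lam * dot y y ->
  forall i, mulmxv M y i = lam * y i.
Proof.
move=> symM hle hy i.
have psdB : forall z, 0 <= bform (lam%:M - M) z z.
  by move=> z; rewrite bform_scalar_subl subr_ge0.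
have /psd_kernel : bform (lam%:M - M) y y = 0 by rewrite bform_scalar_subl hy subrr.
move=> /(_ (scalar_subl_sym symM lam) psdB i).
rewrite -bform_deltal bform_scalar_subl dot_deltal bform_deltal => /eqP.
by rewrite subr_eq0 => /eqP.
Qed.

End RealBilinearForm.

Lemma root_char_poly_opp (F : fieldType) n (M : 'M[F]_n) lam :
  root (char_poly (- M)) lam -> root (char_poly M) (- lam).
Proof.
rewrite -!eigenvalue_root_char => /eigenvalueP [v hv v_neq0].
by apply/eigenvalueP; exists v => //; rewrite scaleNr -hv mulmxN opprK.
Qed.

Lemma rayleigh_sup (R : realType) n (M : 'M[R]_n) : (0 < n)%N ->
  exists2 lam, forall z, bform M z z <= lam * dot z z &
    forall eps, 0 < eps -> exists2 x, 0 < dot x x & (lam - eps) * dot x x < bform M x x.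
Proof.
move=> n_gt0.
pose S : classical_sets.set R :=
  fun r => exists2 x, 0 < dot x x & r = bform M x x / dot x x.
have supS : classical_sets.has_sup S.
  split.
    pose one : 'I_n -> R := fun=> 1.
    exists (bform M one one / dot one one); exists one => //.
    rewrite /dot /one; under eq_bigr do rewrite mulr1.
    by rewrite sumr_const card_ord ltr0n.
  exists (1 + frobenius2 M) => _ [x x_gt0 ->]; rewrite ler_pdivrMr //.
  exact: le_trans (ler_norm _) (bform_normr_le M x).
exists (sup S) => [z|eps eps_gt0].
  have [z0|z_neq0] := eqVneq (dot z z) 0.
    rewrite z0 mulr0 /bform big1 // => i _; rewrite big1 // => j _.
    by rewrite (dot_eq0 z0) !mul0r.
  have z_gt0 : 0 < dot z z by rewrite lt_def z_neq0 dot_ge0.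
  by rewrite -ler_pdivrMr //; apply: sup_upper_bound => //; exists z.
have [_ [x x_gt0 ->]] := sup_adherent eps_gt0 supS.
by exists x; rewrite // -ltr_pdivlMr.
Qed.

(* The supremum [lam] of the Rayleigh quotient makes [lam - M] positive
   semidefinite; were it invertible, coercivity would push the supremum down. *)
Lemma rayleigh_max (R : realType) n (M : 'M[R]_n) : (0 < n)%N ->
  (forall i j, M i j = M j i) ->
  exists2 lam, root (char_poly M) lam & forall z, bform M z z <= lam * dot z z.
Proof.
move=> n_gt0 symM; have [lam ub approx] := rayleigh_sup M n_gt0.
exists lam => //.
have psdB z : 0 <= bform (lam%:M - M) z z by rewrite bform_scalar_subl subr_ge0.
have : ~~ (lam%:M - M \in unitmx).
  apply/negP => /(psd_unit_coercive (scalar_subl_sym symM lam) psdB) [K K_ge0 coercive].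
  have eps_gt0 : 0 < (K + 1)^-1 by rewrite invr_gt0 ltr_wpDl.
  have [x x_gt0 hx] := approx _ eps_gt0; have := coercive x.
  have : (K + 1) * (K + 1)^-1 = 1 by rewrite mulfV // gt_eqF // ltr_wpDl.
  rewrite bform_scalar_subl; nra.
rewrite unitmxE unitfE negbK => /det0P [v v_neq0 vB].
rewrite -eigenvalue_root_char; apply/eigenvalueP; exists v => //.
by apply/eqP; rewrite eq_sym -subr_eq0 -mul_mx_scalar -mulmxBr vB.
Qed.

Section SpectralRadius.
Variables (R : rcfType) (n : nat) (M : 'M[R]_n).

Lemma spec_rad_ge0 : 0 <= spec_rad M.
Proof. exact: bigmax_ge_id. Qed.

Lemma char_poly_neq0 : char_poly M != 0.
Proof. exact/monic_neq0/char_poly_monic. Qed.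

Lemma root_normr_le_spec_rad lam : root (char_poly M) lam -> `|lam| <= spec_rad M.
Proof.
move=> hroot; apply: le_bigmax_seq => //.
by rewrite -(roots_on_rootsR char_poly_neq0) hroot andbT.
Qed.

Lemma spec_rad_attained :
  spec_rad M = 0 \/ exists2 lam, root (char_poly M) lam & `|lam| = spec_rad M.
Proof.
suff [|[lam]] : spec_rad M = 0 \/
    exists2 lam, lam \in rootsR (char_poly M) & `|lam| = spec_rad M.
- by left.
- by rewrite -(roots_on_rootsR char_poly_neq0) => /andP[_ ?]; right; exists lam.
rewrite /spec_rad; elim: (rootsR _) => [|a s IH]; first by left; rewrite big_nil.
rewrite big_cons /Order.max; case: ifP => _; last by right; exists a; rewrite ?mem_head.
case: IH => [->|[lam hlam <-]]; first by left.
by right; exists lam; rewrite // inE hlam orbT.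
Qed.

End SpectralRadius.

Lemma bform_normr_le_spec_rad (R : realType) n (M : 'M[R]_n) z :
  (forall i j, M i j = M j i) -> `|bform M z z| <= spec_rad M * dot z z.
Proof.
move=> symM; case: n M z symM => [|n] M z symM.
  by rewrite /bform /dot !big_ord0 normr0 mulr0.
have symN : forall i j, (- M) i j = (- M) j i by move=> i j; rewrite !mxE symM.
have [lam1 root1 ub1] := rayleigh_max (ltn0Sn n) symM.
have [lam2 /root_char_poly_opp root2 ub2] := rayleigh_max (ltn0Sn n) symN.
have le1 : lam1 <= spec_rad M := le_trans (ler_norm _) (root_normr_le_spec_rad root1).
have le2 : lam2 <= spec_rad M.
  by have := root_normr_le_spec_rad root2; rewrite normrN; exact: le_trans (ler_norm _).
have d_ge0 := dot_ge0 z; have := ub1 z; have := ub2 z; rewrite bformN.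
have := ler_wpM2r d_ge0 le1; have := ler_wpM2r d_ge0 le2.
by rewrite ler_norml; move=> *; apply/andP; split; lra.
Qed.

(* [G_pi] is switching equivalent to [+G] ([sg = false]) or to [-G] ([sg = true]). *)
Definition switching_equiv_pm n (e : rel 'I_n) (pi : {set 'I_n} -> bool) :=
  exists (sg : bool) (s : 'I_n -> bool),
    forall i j, e i j -> pi [set i; j] = sg (+) s i (+) s j.

Lemma same_sign_of_normr_sum (R : realDomainType) (I : finType) (t : I -> R) :
  `|\sum_i t i| = \sum_i `|t i| -> (forall i, 0 <= t i) \/ (forall i, t i <= 0).
Proof.
move=> h; have [sum_ge0|sum_lt0] := leP 0 (\sum_i t i); [left|right] => i.
  have ge0 k : true -> 0 <= `|t k| - t k by rewrite subr_ge0 ler_norm.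
  have /(psumr_eq0P ge0)/(_ i isT)/eqP : \sum_i (`|t i| - t i) = 0.
    by rewrite sumrB -h ger0_norm ?subrr.
  by rewrite subr_eq0 => /eqP <-.
have ge0 k : true -> 0 <= `|t k| + t k by rewrite -lerBlDr sub0r -normrN ler_norm.
have /(psumr_eq0P ge0)/(_ i isT)/eqP : \sum_i (`|t i| + t i) = 0.
  by rewrite big_split /= -h ltr0_norm ?addNr.
by rewrite addr_eq0 -oppr_ge0 => /eqP <-.
Qed.

Lemma sign_mul_ge0 (R : realDomainType) (a b : R) (p : bool) : a != 0 -> b != 0 ->
  (0 <= a * (-1) ^+ p * b) = (p == (a < 0) (+) (b < 0)).
Proof.
move=> a_neq0 b_neq0; rewrite !lt_neqAle a_neq0 b_neq0 /=.
have [a_le0|a_gt0] := leP a 0; have [b_le0|b_gt0] := leP b 0; case: p => /=;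
  rewrite ?expr0 ?expr1 ?mulr1 ?mulrN1 ?mulNr ?oppr_ge0 ?eqxx //; apply/idP/idP; nra.
Qed.

Section SignedAdjacency.
Variables (R : realType) (n : nat) (e : rel 'I_n).
Hypothesis sym_e : symmetric e.
Implicit Types (pi : {set 'I_n} -> bool) (x y : 'I_n -> R).

Lemma signed_adjE pi i j : signed_adj R e pi i j = if e i j then (-1) ^+ pi [set i; j] else 0.
Proof. by rewrite mxE. Qed.

Lemma adjE i j : adj R e i j = if e i j then 1 else 0.
Proof. by rewrite signed_adjE; case: (e i j). Qed.

Lemma signed_adj_sym pi i j : signed_adj R e pi i j = signed_adj R e pi j i.
Proof. by rewrite !signed_adjE sym_e setUC. Qed.

Lemma adj_sym i j : adj R e i j = adj R e j i.
Proof. exact: signed_adj_sym. Qed.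

Lemma normr_bform_signed_adj_le pi x :
  `|bform (signed_adj R e pi) x x| <= bform (adj R e) (fun i => `|x i|) (fun i => `|x i|).
Proof.
apply: le_trans (ler_norm_sum _ _ _) _; apply: ler_sum => i _.
apply: le_trans (ler_norm_sum _ _ _) _; apply: ler_sum => j _.
by rewrite !normrM signed_adjE adjE; case: (e i j); rewrite ?normrX ?normrN1 ?expr1n ?normr0.
Qed.

Lemma spec_rad_signed_adj_le pi : spec_rad (signed_adj R e pi) <= spec_rad (adj R e).
Proof.
case: (spec_rad_attained (signed_adj R e pi)) => [->|[lam hroot <-]].
  exact: spec_rad_ge0.
have [x x_neq0 hx] := root_char_poly_eigvec (signed_adj_sym pi) hroot.
have d_gt0 := dot_gt0 x_neq0.
rewrite -(ler_pM2r d_gt0) -{1}(ger0_norm (ltW d_gt0)) -normrM.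
rewrite -(bform_eigen hx) -(dot_normr x).
apply: le_trans (normr_bform_signed_adj_le pi x) _.
exact: le_trans (ler_norm _) (bform_normr_le_spec_rad _ adj_sym).
Qed.

Lemma spec_rad_switching_ge pi :
  switching_equiv_pm e pi -> spec_rad (adj R e) <= spec_rad (signed_adj R e pi).
Proof.
move=> [sg [s hs]]; case: (spec_rad_attained (adj R e)) => [->|[lam hroot <-]].
  exact: spec_rad_ge0.
have [x x_neq0 hx] := root_char_poly_eigvec adj_sym hroot.
pose sgn (b : bool) : R := (-1) ^+ b.
have sgn_sq b : sgn b * sgn b = 1 by rewrite -expr2 sqrr_sign.
pose z i := sgn (s i) * x i.
have dz : dot z z = dot x x.
  by apply: eq_bigr => i _; rewrite /z mulrACA sgn_sq mul1r.
have bz : bform (signed_adj R e pi) z z = sgn sg * bform (adj R e) x x.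
  rewrite /bform mulr_sumr; apply: eq_bigr => i _; rewrite mulr_sumr.
  apply: eq_bigr => j _; rewrite signed_adjE adjE /z; case eij: (e i j); last by ring.
  rewrite hs // !signr_addb -/(sgn _).
  have -> : sgn (s i) * x i * (sgn sg * sgn (s i) * sgn (s j)) * (sgn (s j) * x j)
      = (sgn (s i) * sgn (s i)) * (sgn (s j) * sgn (s j)) * (sgn sg * (x i * 1 * x j)).
    by ring.
  by rewrite !sgn_sq !mul1r.
have d_gt0 := dot_gt0 x_neq0.
rewrite -(ler_pM2r d_gt0); have := bform_normr_le_spec_rad z (signed_adj_sym pi).
rewrite dz bz normrM normrX normrN1 expr1n mul1r (bform_eigen hx) normrM.
by rewrite (ger0_norm (dot_ge0 x)).
Qed.

Lemma adj_spec_rad_gt0 i j : e i j -> 0 < spec_rad (adj R e).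
Proof.
move=> eij; rewrite lt_def spec_rad_ge0 andbT; apply/eqP => rho0.
have form0 z : bform (adj R e) z z = 0.
  by have := bform_normr_le_spec_rad z adj_sym; rewrite rho0 mul0r normr_le0 => /eqP.
have psd z : 0 <= bform (adj R e) z z by rewrite form0.
have := psd_kernel adj_sym psd (form0 (delta R j)) i.
by rewrite mulmxv_delta adjE eij => /eqP; rewrite oner_eq0.
Qed.

Lemma adj_nonneg_eigvec_neq0 lam y : connected_graph e ->
  (forall i, 0 <= y i) -> (forall i, mulmxv (adj R e) y i = lam * y i) ->
  (exists i, y i != 0) -> forall i, y i != 0.
Proof.
move=> conn y_ge0 hy [i0 yi0] i.
have nbr_eq0 j k : e j k -> y j = 0 -> y k = 0.
  move=> ejk yj; have hsum : mulmxv (adj R e) y j = 0 by rewrite hy yj mulr0.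
  have terms_ge0 l : true -> 0 <= adj R e j l * y l.
    by rewrite adjE; case: (e j l); rewrite ?mul1r ?mul0r.
  by have := psumr_eq0P terms_ge0 hsum (i := k) isT; rewrite adjE ejk mul1r.
have cl : closed e [pred k | y k == 0].
  apply: intro_closed; first exact: sym_connect_sym.
  by move=> j k ejk; rewrite !inE => /eqP /(nbr_eq0 j k ejk) ->.
by have := closed_connect cl (conn i i0); rewrite !inE => ->.
Qed.

Lemma normr_bform_signed_adj_eq pi x : (forall i, x i != 0) ->
  `|bform (signed_adj R e pi) x x| = bform (adj R e) (fun i => `|x i|) (fun i => `|x i|) ->
  switching_equiv_pm e pi.
Proof.
move=> x_full; rewrite {1}/bform.
rewrite [RHS](eq_bigr (fun i => \sum_j `|x i * signed_adj R e pi i j * x j|)).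
  rewrite !pair_bigA => /same_sign_of_normr_sum [t_ge0|t_le0];
    [exists false | exists true]; exists (fun i => x i < 0) => i j eij /=.
    by have := t_ge0 (i, j); rewrite /= signed_adjE eij sign_mul_ge0 // => /eqP.
  have := t_le0 (i, j); rewrite /= signed_adjE eij -oppr_ge0 -!mulNr.
  rewrite sign_mul_ge0 ?oppr_eq0 // oppr_lt0 ltNge le_eqVlt (negbTE (x_full i)) => /eqP ->.
  by case: (x i < 0).
move=> i _; apply: eq_bigr => j _; rewrite !normrM signed_adjE adjE.
by case: (e i j); rewrite ?normrX ?normrN1 ?expr1n ?normr0.
Qed.

Lemma spec_rad_eq_switching pi : connected_graph e -> 0 < spec_rad (adj R e) ->
  spec_rad (signed_adj R e pi) = spec_rad (adj R e) -> switching_equiv_pm e pi.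
Proof.
move=> conn rho_gt0 heq.
have [rho0|[lam hroot hlam]] := spec_rad_attained (signed_adj R e pi).
  by move: rho_gt0; rewrite -heq rho0 ltxx.
have [x x_neq0 hx] := root_char_poly_eigvec (signed_adj_sym pi) hroot.
pose y i := `|x i|.
have ub z : bform (adj R e) z z <= spec_rad (adj R e) * dot z z.
  exact: le_trans (ler_norm _) (bform_normr_le_spec_rad z adj_sym).
have hxx : `|bform (signed_adj R e pi) x x| = spec_rad (adj R e) * dot x x.
  by rewrite (bform_eigen hx) normrM (ger0_norm (dot_ge0 x)) hlam heq.
have hyy : bform (adj R e) y y = spec_rad (adj R e) * dot y y.
  apply/le_anti; rewrite ub /= dot_normr -hxx; exact: normr_bform_signed_adj_le.
apply: (normr_bform_signed_adj_eq (x := x)); last by rewrite hxx -(dot_normr x).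
move=> i; rewrite -normr_eq0.
apply: (adj_nonneg_eigvec_neq0 conn _ (rayleigh_eigvec adj_sym ub hyy)) => [k|].
  exact: normr_ge0.
by case: x_neq0 => k xk; exists k; rewrite normr_eq0.
Qed.

Lemma spec_rad_signed_adj_geP pi : connected_graph e ->
  ~ (spec_rad (signed_adj R e pi) < spec_rad (adj R e)) <-> switching_equiv_pm e pi.
Proof.
move=> conn; split => [not_lt|hsw]; last by rewrite ltNge spec_rad_switching_ge.
have [/existsP [i /existsP [j eij]]|no_edge] := boolP [exists i, exists j, e i j].
  apply: spec_rad_eq_switching (adj_spec_rad_gt0 eij) _ => //.
  by apply/le_anti; rewrite spec_rad_signed_adj_le leNgt; apply/negP.
exists false, (fun=> false) => i j eij; move/negP: no_edge; case.
by apply/existsP; exists i; apply/existsP; exists j.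
Qed.

End SignedAdjacency.

Section PathParity.
Variables (T : Type) (w : T -> T -> bool).

Fixpoint path_parity (x : T) (p : seq T) : bool :=
  if p is y :: p' then w x y (+) path_parity y p' else false.

Lemma path_parity_cat x p1 p2 :
  path_parity x (p1 ++ p2) = path_parity x p1 (+) path_parity (last x p1) p2.
Proof. by elim: p1 x => [|y p1 IH] x //=; rewrite IH addbA. Qed.

Lemma path_parity_rcons x p y :
  path_parity x (rcons p y) = path_parity x p (+) w (last x p) y.
Proof. by rewrite -cats1 path_parity_cat /= addbF. Qed.

Lemma last_rev_belast (x : T) p : last (last x p) (rev (belast x p)) = x.
Proof. by case: p => [|y p] //=; rewrite rev_cons last_rcons. Qed.

Lemma path_parity_rev x p : (forall a b, w a b = w b a) ->
  path_parity (last x p) (rev (belast x p)) = path_parity x p.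
Proof.
move=> sym_w; elim: p x => [|y p IH] x //=.
by rewrite rev_cons path_parity_rcons IH last_rev_belast sym_w addbC.
Qed.

End PathParity.

Lemma path_parity_telescope (T : Type) (s : T -> bool) x p :
  path_parity (fun a b => s a (+) s b) x p = s x (+) s (last x p).
Proof.
elim: p x => [|y p IH] x /=; first by rewrite addbb.
by rewrite IH addbA -(addbA (s x)) addbb addbF.
Qed.

Definition cycle_parity (T : eqType) (w : T -> T -> bool) (c : seq T) : bool :=
  \big[addb/false]_(x <- c) w x (next c x).

Lemma path_parity_fpath (T : eqType) (w : T -> T -> bool) (g : T -> T) x p :
  fpath g x p -> path_parity w x p = \big[addb/false]_(y <- belast x p) w y (g y).
Proof.
elim: p x => [|y p IH] x /=; first by rewrite big_nil.
by case/andP => /eqP <- /IH ->; rewrite big_cons.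
Qed.

Lemma cycle_parityE (T : eqType) (w : T -> T -> bool) x p :
  uniq (x :: p) -> cycle_parity w (x :: p) = path_parity w x (rcons p x).
Proof.
move=> u; have := cycle_next u; rewrite /cycle /= => hp.
by rewrite (path_parity_fpath _ hp) belast_rcons.
Qed.

Lemma big_addb_const (T : Type) (c : seq T) (b : bool) (f : T -> bool) :
  \big[addb/false]_(x <- c) (b (+) f x)
  = (b && odd (size c)) (+) \big[addb/false]_(x <- c) f x.
Proof.
elim: c => [|a c IH]; first by rewrite !big_nil andbF.
rewrite !big_cons IH /=; move: (odd _) (f a) (\big[_/_]_(_ <- _) _) => u v t.
by clear IH; case: b u v t => [] [] [] [].
Qed.

Lemma big_addb_eq (T : finType) (E : {set T}) X0 :
  \big[addb/false]_(X in E) (X == X0) = (X0 \in E).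
Proof.
have [X0E|X0notE] := boolP (X0 \in E).
  by rewrite (bigD1 X0) //= eqxx big1 // => X /andP[_ /negbTE].
by apply: big1 => X XE; apply: contraNF X0notE => /eqP <-.
Qed.

Lemma not_uniq_split (T : eqType) (s : seq T) : ~~ uniq s ->
  exists s1 y s2 s3, s = s1 ++ y :: s2 ++ y :: s3.
Proof.
elim: s => [|a s IH] //=; rewrite negb_and negbK => /orP [a_in|/IH [s1 [y [s2 [s3 ->]]]]].
  by case/splitPr: a_in => s2 s3; exists [::], a, s2, s3.
by exists (a :: s1), y, s2, s3.
Qed.

Lemma next_next_neq (T : eqType) (c : seq T) x :
  uniq c -> (2 < size c)%N -> x \in c -> next c (next c x) != x.
Proof.
move=> u c_gt2 /rot_to [i q E]; rewrite -!(next_rot i u) E.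
have := c_gt2; rewrite -(size_rot i) -(rot_uniq i) E in u *.
case: q E u => [|y [|z q]] // _ /and3P [x_notin y_notin _] _.
rewrite !inE !negb_or in x_notin y_notin; case/and3P: x_notin => xy xz _.
have -> : next (x :: y :: z :: q) x = y by rewrite /next /= eqxx.
have -> : next (x :: y :: z :: q) y = z by rewrite /next /= eq_sym (negbTE xy) eqxx.
by rewrite eq_sym.
Qed.

Definition edge_sign n (pi : {set 'I_n} -> bool) (a b : 'I_n) : bool := pi [set a; b].

Section CycleEdges.
Variables (n : nat) (c : seq 'I_n).
Hypotheses (uniq_c : uniq c) (c_gt2 : (2 < size c)%N).

Lemma cycle_edge_inj : {in c &, injective (fun x => [set x; next c x])}.
Proof.
move=> x y x_in y_in /= exy.
have : x \in [set y; next c y] by rewrite -exy set21.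
have : y \in [set x; next c x] by rewrite exy set21.
rewrite !inE => /orP [/eqP -> //|/eqP y_next] /orP [/eqP //|/eqP x_next].
by move: (next_next_neq uniq_c c_gt2 x_in); rewrite -y_next -x_next eqxx.
Qed.

Lemma card_cycle_edges : #|cycle_edges c| = size c.
Proof. by rewrite card_in_imset; [apply/card_uniqP | exact: cycle_edge_inj]. Qed.

Lemma cycle_parity_edges (f : {set 'I_n} -> bool) :
  cycle_parity (edge_sign f) c = \big[addb/false]_(X in cycle_edges c) f X.
Proof.
rewrite /cycle_edges big_imset /=; last exact: cycle_edge_inj.
by rewrite /cycle_parity big_uniq.
Qed.

End CycleEdges.

Section Harary.
Variables (n : nat) (e : rel 'I_n) (w : 'I_n -> 'I_n -> bool).
Hypotheses (irr_e : irreflexive e) (sym_w : forall x y, w x y = w y x).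
Hypothesis cycle_parity0 : forall c, is_cycle e c -> cycle_parity w c = false.

(* A closed walk with a repeated vertex splits into two shorter closed walks;
   without one it is a cycle or runs back and forth along a single edge. *)
Lemma closed_walk_parity x p : path e x p -> last x p = x -> path_parity w x p = false.
Proof.
have [k] := ubnP (size p); elim: k x p => // k IH x p.
case/lastP: p => [//|q y]; rewrite size_rcons ltnS last_rcons => q_lt walk y_x; subst y.
have IHq y r : (size r <= size q)%N -> path e y r -> last y r = y ->
    path_parity w y r = false.
  by move=> r_le; apply: IH; lia.
have [u|/not_uniq_split [s1 [y [s2 [s3 E]]]]] := boolP (uniq (x :: q)).
  case: q q_lt walk u {IHq} => [|y [|z q]] _ walk u.
  - by move: walk; rewrite /= irr_e.
  - by rewrite /= sym_w addbF addbb.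
  by rewrite -cycle_parityE // cycle_parity0 // /is_cycle /ucycleb u andbT.
case: s1 E => [|x' s1] [xE q_eq].
  rewrite -{}xE in q_eq; rewrite {}q_eq in q_lt walk IHq *; move: walk.
  rewrite rcons_cat /= -cat_rcons cat_path path_parity_cat last_rcons.
  case/andP => walk1 walk2; rewrite !IHq ?last_rcons ?size_rcons ?size_cat //=; lia.
rewrite {}q_eq in q_lt walk IHq *; move: walk.
rewrite rcons_cat /= rcons_cat /= -!cat_rcons !cat_path.
rewrite !path_parity_cat !last_rcons => /and3P [walk1 walk2 walk3].
rewrite (IHq y (rcons s2 y)) ?last_rcons //; last first.
  by rewrite !(size_cat, size_rcons) /= !size_cat /=; lia.
rewrite addFb -[X in path_parity w X (rcons s3 x)](last_rcons x s1 y) -path_parity_cat.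
apply: IHq; first by rewrite !(size_cat, size_rcons) /= !size_cat /=; lia.
  by rewrite cat_path walk1 last_rcons.
by rewrite last_cat !last_rcons.
Qed.

Lemma harary_balance : symmetric e -> connected_graph e ->
  exists s : 'I_n -> bool, forall i j, e i j -> w i j = s i (+) s j.
Proof.
move=> sym_e conn; case: (pickP 'I_n) => [r _|no_vertex]; last first.
  by exists (fun=> false) => i; have := no_vertex i.
have ex_path v : exists p, path e r p && (last r p == v).
  by case/connectP: (conn r v) => p walk ->; exists p; rewrite walk eqxx.
pose pth v := xchoose (ex_path v).
exists (fun v => path_parity w r (pth v)) => u v euv.
have /andP [walk_u /eqP last_u] := xchooseP (ex_path u).
have /andP [walk_v /eqP last_v] := xchooseP (ex_path v).
have back_walk : path e v (rev (belast r (pth v))).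
  by rewrite -{1}last_v rev_path; apply: sub_path walk_v => a b; rewrite sym_e.
have := @closed_walk_parity r (pth u ++ v :: rev (belast r (pth v))).
rewrite cat_path walk_u last_u /= euv back_walk last_cat /= -{1}last_v last_rev_belast.
rewrite path_parity_cat last_u /= -[X in path_parity w X (rev _)]last_v path_parity_rev //.
by move=> /(_ isT erefl); case: (w u v); case: path_parity; case: path_parity.
Qed.

End Harary.

Lemma is_cycleP n (e : rel 'I_n) c :
  is_cycle e c -> [/\ uniq c, (2 < size c)%N & cycle e c].
Proof. by case/andP => c_gt2 /andP [cyc u]. Qed.

(* Every cycle of [G_pi] has the sign it has in [+G] ([sg = false]) or in [-G]
   ([sg = true]). *)
Definition pm_cycle_signs n (e : rel 'I_n) (pi : {set 'I_n} -> bool) :=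
  exists sg, forall c, is_cycle e c -> cycle_parity (edge_sign pi) c = sg && odd (size c).

Section Switching.
Variables (n : nat) (e : rel 'I_n).
Hypothesis simple_e : simple_graph e.

Lemma cycle_parity_switching pi sg (s : 'I_n -> bool) c : is_cycle e c ->
  (forall i j, e i j -> pi [set i; j] = sg (+) s i (+) s j) ->
  cycle_parity (edge_sign pi) c = sg && odd (size c).
Proof.
move=> /is_cycleP [u c_gt2 cyc] hs.
have -> : cycle_parity (edge_sign pi) c = cycle_parity (fun a b => sg (+) (s a (+) s b)) c.
  by apply: eq_big_seq => x x_in; rewrite /edge_sign hs ?addbA // (next_cycle cyc).
rewrite /cycle_parity big_addb_const -/(cycle_parity (fun a b => s a (+) s b) c).
case: c u c_gt2 {cyc} => [|a q] u // _.
by rewrite cycle_parityE // path_parity_telescope last_rcons addbb addbF.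
Qed.

Lemma switching_equiv_pm_cycleP pi : connected_graph e ->
  switching_equiv_pm e pi <-> pm_cycle_signs e pi.
Proof.
move=> conn; split => [[sg [s hs]]|[sg hsg]].
  by exists sg => c cyc; exact: cycle_parity_switching cyc hs.
have [sym_e irr_e] := simple_e.
pose w a b := sg (+) edge_sign pi a b.
have sym_w a b : w a b = w b a by rewrite /w /edge_sign setUC.
have cycle_w0 c : is_cycle e c -> cycle_parity w c = false.
  by move=> cyc; rewrite /cycle_parity big_addb_const -/(cycle_parity _ c) hsg // addbb.
have [s hs] := harary_balance irr_e sym_w cycle_w0 sym_e conn.
by exists sg, s => i j eij; rewrite -addbA -hs // /w addbA addbb.
Qed.

Lemma tree_or_odd_unicyclicP : connected_graph e ->
  (forall pi, pm_cycle_signs e pi) <-> is_tree e \/ is_odd_unicyclic e.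
Proof.
move=> conn; split => [H|[[_ no_cycle]|[_ [c0 [cyc0 unique odd0]]]] pi].
- have edge_mem X : exists sg, forall c, is_cycle e c ->
      (X \in cycle_edges c) = sg && odd (size c).
    have [sg hsg] := H (fun Y => Y == X); exists sg => c cyc.
    have [u c_gt2 _] := is_cycleP cyc.
    by rewrite -hsg // cycle_parity_edges // big_addb_eq.
  have cycle_odd c : is_cycle e c -> odd (size c).
    move=> cyc; have [_ c_gt2 _] := is_cycleP cyc; case: c c_gt2 cyc => // x q _ cyc.
    have [sg hsg] := edge_mem [set x; next (x :: q) x].
    have := hsg _ cyc; rewrite /cycle_edges (imset_f _ (mem_head x q)).
    by case: (odd _); rewrite ?andbF.
  have [[c0 cyc0]|no_cycle] := classic (exists c, is_cycle e c); last first.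
    by left; split => // c; apply/negP => cyc; apply: no_cycle; exists c.
  right; split => //; exists c0; split => // [c cyc|]; last exact: cycle_odd.
  by apply/setP => X; have [sg hsg] := edge_mem X; rewrite !hsg // !cycle_odd.
- by exists false => c cyc; have := no_cycle c; rewrite cyc.
exists (cycle_parity (edge_sign pi) c0) => c cyc.
have [u c_gt2 _] := is_cycleP cyc; have [u0 c0_gt2 _] := is_cycleP cyc0.
rewrite !cycle_parity_edges // (unique c cyc).
by rewrite -(card_cycle_edges u c_gt2) (unique c cyc) card_cycle_edges // odd0 andbT.
Qed.

End Switching.

Theorem mainTheorem2 (R : realType) (n : nat) (e : rel 'I_n) :
  simple_graph e -> connected_graph e ->
  ((forall pi : {set 'I_n} -> bool,
      ~ (spec_rad (signed_adj R e pi) < spec_rad (adj R e)))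
   <-> (is_tree e \/ is_odd_unicyclic e)).
Proof.
move=> simple_e conn; have [sym_e _] := simple_e.
have spectral_switching pi := spec_rad_signed_adj_geP R sym_e pi conn.
have switching_cycles pi := switching_equiv_pm_cycleP simple_e pi conn.
split => [not_lt | /(tree_or_odd_unicyclicP conn) balanced pi].
  apply/(tree_or_odd_unicyclicP conn) => pi.
  by apply/switching_cycles/spectral_switching/not_lt.
by apply/spectral_switching/switching_cycles/balanced.
Qed.
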